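(* Let $G$ be a compact matrix quantum group with strong polynomial growth with respect to a length function $\ell$, and for $\Lambda\in\mathbb{N}$ let $A_\Lambda=\{\alpha\in\operatorname{Irred}(G):\ell(\alpha)\le\Lambda\}$. Then $(A_\Lambda)_{\Lambda\in\mathbb{N}}$ is a Følner sequence in the fusion algebra $F(G)$: for every finite nonempty $S\subseteq\operatorname{Irred}(G)$ and every $\varepsilon>0$ there is $\Lambda_0$ such that $\sum_{\xi\in\partial_S(A_\Lambda)}d(\xi)^2<\varepsilon\sum_{\xi\in A_\Lambda}d(\xi)^2$ for all $\Lambda\ge\Lambda_0$.
   Context: $\operatorname{Irred}(G)$ is a complete set of representatives of irreducible unitary corepresentations of $G$; $d(\alpha)$ is the dimension of $\alpha$, $e$ the trivial corepresentation, $\bar\alpha$ the conjugate. The fusion algebra $F(G)$ has basis $\operatorname{Irred}(G)$ with product $\alpha\beta=\sum_\gamma N^\gamma_{\alpha,\beta}\gamma$, $N^\gamma_{\alpha,\beta}$ the multiplicity of $\gamma$ in $\alpha\otimes\beta$; $\operatorname{supp}(\alpha\xi)=\{\gamma: N^\gamma_{\alpha,\xi}\ne0\}$. A length function $\ell:\operatorname{Irred}(G)\to[0,\infty)$ satisfies $\ell(e)=0$, $\ell(\bar\alpha)=\ell(\alpha)$, and $\ell(\gamma)\le\ell(\alpha)+\ell(\beta)$ whenever $N^\gamma_{\alpha,\beta}\ne0$. Strong polynomial growth w.r.t. $\ell$: there exist $c_1,c_2,s>0$ with $c_2n^s\le\sum_{\ell(\alpha)\in(n-1,n]}d(\alpha)^2\le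 c_1n^s$ for all $n\in\mathbb{N}$. For finite $S,F\subseteq\operatorname{Irred}(G)$ the boundary is $\partial_S(F)=\{\alpha\in F:\exists\xi\in S,\ \operatorname{supp}(\alpha\xi)\not\subseteq F\}\cup\{\alpha\in F^c:\exists\xi\in S,\ \operatorname{supp}(\alpha\xi)\not\subseteq F^c\}$, where $F^c=\operatorname{Irred}(G)\setminus F$. *)

From HB Require Import structures.
From mathcomp Require Import all_boot all_order all_algebra finmap.
From mathcomp Require Import all_classical all_reals all_analysis.
Set Implicit Arguments. Unset Strict Implicit. Unset Printing Implicit Defensive.
Import Order.TTheory GRing.Theory Num.Theory.
Local Open Scope classical_set_scope.
Local Open Scope ring_scope.

(* Fusion data of a compact quantum group G:
   I     = Irred(G) (a set of representatives of irreducible unitary corepresentations),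
   e     = trivial corepresentation,
   conj  = conjugate corepresentation  alpha |-> bar alpha,
   N g a b = N^g_{a,b}, multiplicity of g in a (x) b,
   d     = dimension. *)

Definition supp {I : Type} (N : I -> I -> I -> nat) (a x : I) : set I :=
  [set g | N g a x <> 0%N].

Inductive generated {I : Type} (e : I) (conj : I -> I) (N : I -> I -> I -> nat)
    (U : set I) : I -> Prop :=
| gen_e : generated e conj N U e
| gen_step a x g : generated e conj N U a -> (U x \/ U (conj x)) ->
    N g a x <> 0%N -> generated e conj N U g.

Definition cmqg_fusion {I : choiceType} (e : I) (conj : I -> I)
    (N : I -> I -> I -> nat) (d : I -> nat) : Prop :=
  [/\ (forall a, conj (conj a) = a) /\ conj e = e,
      d e = 1%N /\ (forall a, (0 < d a)%N),
      (forall a b, finite_set (supp N a b)) /\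
      (forall a b, ((d a * d b)%:R : int) = \sum_(g \in [set: I]) ((N g a b * d g)%:R : int)),
      (forall a g, N g e a = (g == a) :> nat /\ N g a e = (g == a) :> nat) /\
      (forall a b g, N g a b = N a g (conj b) /\ N g a b = N b (conj a) g) /\
      (forall a b c f,
          \sum_(x \in [set: I]) ((N x a b * N f x c)%:R : int)
        = \sum_(x \in [set: I]) ((N x b c * N f a x)%:R : int))
    & exists U : {fset I}, forall a, generated e conj N [set` U] a].

Definition length_function {I : Type} (R : realType) (e : I) (conj : I -> I)
    (N : I -> I -> I -> nat) (ell : I -> R) : Prop :=
  [/\ forall a, 0 <= ell a, ell e = 0, forall a, ell (conj a) = ell a
    & forall a b g, N g a b <> 0%N -> ell g <= ell a + ell b].

(* Strong polynomial growth w.r.t. ell (the shells { ell in (n-1,n] } being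
   finite, as forced by the finiteness of the sums). *)
Definition strong_poly_growth {I : choiceType} (R : realType) (d : I -> nat)
    (ell : I -> R) : Prop :=
  (forall n : nat, finite_set [set a | n%:R - 1 < ell a <= n%:R]) /\
  exists c1 c2 s : R, [/\ 0 < c1, 0 < c2, 0 < s &
    forall n : nat, (0 < n)%N ->
      c2 * (n%:R `^ s) <= \sum_(a \in [set a | n%:R - 1 < ell a <= n%:R]) ((d a)%:R : R) ^+ 2
      /\ \sum_(a \in [set a | n%:R - 1 < ell a <= n%:R]) ((d a)%:R : R) ^+ 2 <= c1 * (n%:R `^ s)].

Definition boundary {I : Type} (N : I -> I -> I -> nat) (S F : set I) : set I :=
  [set a | (F a /\ exists2 x, S x & ~ (supp N a x `<=` F))
        \/ (~ F a /\ exists2 x, S x & ~ (supp N a x `<=` ~` F))].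

Definition ball_len {I : Type} (R : realType) (ell : I -> R) (L : nat) : set I :=
  [set a | ell a <= L%:R].

From HB Require Import structures.
From mathcomp Require Import all_boot all_order all_algebra finmap.
From mathcomp Require Import all_classical all_reals all_analysis.
From mathcomp Require Import ring lra zify.
Import Order.TTheory GRing.Theory Num.Theory.
Local Open Scope classical_set_scope.
Local Open Scope ring_scope.

Set Implicit Arguments. Unset Strict Implicit. Unset Printing Implicit Defensive.

(* Let M bound the length on S.  By the triangle inequality for lengths and
   Frobenius reciprocity, the boundary of the ball A_L lies in the annulus
   L - M < l <= L + M, made of 2M unit shells, each with sum of d^2 at most
   c1 (L + M)^s.  The ball contains the shells between L/2 and L, each with
   sum of d^2 at least c2 (L/2)^s.  Hence the ratio of the two sums is
   O(M / L). *)

Lemma ler_fsum_subset (I : choiceType) (R : numDomainType) (A B : set I) (f : I -> R) :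
  finite_set B -> A `<=` B -> (forall x, B x -> 0 <= f x) ->
  \sum_(x \in A) f x <= \sum_(x \in B) f x.
Proof.
move=> finB AB f_ge0; have finA := sub_finite_set AB finB.
rewrite -[in leRHS](setDUK AB) fsbigU //; last by move=> x [Ax []].
- by rewrite lerDl; apply: fsumr_ge0 => x [Bx _]; exact: f_ge0.
- exact: finite_setD.
Qed.

Lemma fset_nat_ub (I : choiceType) (R : archiRealFieldType) (S : {fset I}) (g : I -> R) :
  exists M : nat, forall x, x \in S -> g x <= M%:R.
Proof.
exists (\max_(x <- S) Num.bound `|g x|)%N => x Sx.
apply: le_trans (ler_norm _) _; apply: le_trans (ltW (archi_boundP (normr_ge0 _))) _.
by rewrite ler_nat (leq_bigmax_seq _ Sx).
Qed.

Definition annulus {I : Type} {R : realType} (ell : I -> R) (a b : nat) : set I :=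
  [set x | a%:R < ell x <= b%:R].

Lemma boundary_ball_sub_annulus (I : Type) (R : realType) (e : I) (conj : I -> I)
    (N : I -> I -> I -> nat) (ell : I -> R) :
  length_function e conj N ell -> (forall a b g, N g a b = N a g (conj b)) ->
  forall (S : set I) (M L : nat), (forall x, S x -> ell x <= M%:R) -> (M <= L)%N ->
  boundary N S (ball_len ell L) `<=` annulus ell (L - M) (L + M).
Proof.
move=> [_ _ ell_conj ell_tri] frob S M L ellS leML x.
rewrite /annulus /ball_len /= natrD natrB // => -[] [/= ballx [xi /ellS ellxi]].
- move=> /nonsubset [g [Ng /negP]]; rewrite -ltNge => ltLg.
  have tri := ell_tri _ _ _ Ng; apply/andP; split; lra.
- move=> /nonsubset [g [Ng /contrapT /= ballg]].
  have Nx : N x g (conj xi) <> 0%N by rewrite -frob.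
  have := ell_tri _ _ _ Nx; rewrite ell_conj => tri.
  move/negP: ballx; rewrite -ltNge => ltLx.
  apply/andP; split; have := ler0n R M; lra.
Qed.

Section Annuli.
Variables (I : choiceType) (R : realType) (ell : I -> R).

Lemma annulus1E n : annulus ell n n.+1 = [set x | n.+1%:R - 1 < ell x <= n.+1%:R].
Proof. by rewrite /annulus -natr1 addrK. Qed.

Lemma annulus_set0 a b : (b <= a)%N -> annulus ell a b = set0.
Proof.
move=> leba; apply/seteqP; split => x // /andP [ltax lexb].
by have := lt_le_trans ltax lexb; rewrite ltr_nat ltnNge leba.
Qed.

Lemma annulusSr a b : (a <= b)%N ->
  annulus ell a b.+1 = annulus ell a b `|` annulus ell b b.+1.
Proof.
move=> leab; have leab' : a%:R <= b%:R :> R by rewrite ler_nat.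
apply/seteqP; split => x; rewrite /annulus /=.
- case: (lerP (ell x) b%:R) => [lexb /andP [ltax _] | ltbx /andP [_ lexb]].
  + by left; rewrite ltax.
  + by right; rewrite lexb.
- by rewrite -natr1 => -[] /andP [h1 h2]; apply/andP; split; lra.
Qed.

Hypothesis finite_shell : forall n : nat, finite_set [set x | n%:R - 1 < ell x <= n%:R].

Lemma finite_annulus a b : finite_set (annulus ell a b).
Proof.
have sub0 : annulus ell a b `<=` annulus ell 0 b.
  by move=> x /andP [ltax lexb]; rewrite /annulus /= lexb (le_lt_trans _ ltax).
apply: sub_finite_set sub0 _; elim: b => [|b IH].
  by rewrite annulus_set0.
by rewrite annulusSr // finite_setU annulus1E.
Qed.

Hypothesis ell_ge0 : forall x, 0 <= ell x.

Lemma finite_ball L : finite_set (ball_len ell L).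
Proof.
apply: (@sub_finite_set _ _ ([set x | 0%:R - 1 < ell x <= 0%:R] `|` annulus ell 0 L)).
  2: by rewrite finite_setU; split; [exact: finite_shell | exact: finite_annulus].
move=> x lexL; case: (lerP (ell x) 0) => [lex0 | lt0x].
- by left; rewrite /= lex0 andbT; have := ell_ge0 x; lra.
- by right; rewrite /annulus /= lt0x.
Qed.

Lemma fsum_annulus (f : I -> R) a b : (a <= b)%N ->
  \sum_(x \in annulus ell a b) f x = \sum_(a <= n < b) \sum_(x \in annulus ell n n.+1) f x.
Proof.
elim: b => [|b IH]; first by move=> _; rewrite annulus_set0 // fsbig_set0 big_geq.
rewrite leq_eqVlt => /predU1P [-> | ltab]; first by rewrite annulus_set0 // fsbig_set0 big_geq.
rewrite annulusSr // fsbigU; first by rewrite IH // big_nat_recr.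
- exact: finite_annulus.
- exact: finite_annulus.
- by move=> x [/andP [_ lexb] /andP [ltbx _]]; lra.
Qed.

Variables (f : I -> R) (c1 c2 s : R).
Hypotheses (f_ge0 : forall x, 0 <= f x) (c1_ge0 : 0 <= c1) (c2_ge0 : 0 <= c2) (s_ge0 : 0 <= s).
Hypothesis shell_sum_bounds : forall n : nat, (0 < n)%N ->
  c2 * n%:R `^ s <= \sum_(x \in [set x | n%:R - 1 < ell x <= n%:R]) f x
  /\ \sum_(x \in [set x | n%:R - 1 < ell x <= n%:R]) f x <= c1 * n%:R `^ s.

Lemma annulus_sum_ge k L : (k <= L)%N ->
  c2 * k%:R `^ s *+ (L - k) <= \sum_(x \in annulus ell k L) f x.
Proof.
move=> lekL; rewrite fsum_annulus // -sumr_const_nat; apply: ler_sum_nat => n /andP [lekn _].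
rewrite annulus1E; apply: le_trans _ (shell_sum_bounds (ltn0Sn n)).1.
by rewrite ler_wpM2l // ge0_ler_powR // ?nnegrE // ler_nat ltnW.
Qed.

Lemma annulus_sum_le a b : (a <= b)%N ->
  \sum_(x \in annulus ell a b) f x <= c1 * b%:R `^ s *+ (b - a).
Proof.
move=> leab; rewrite fsum_annulus // -sumr_const_nat; apply: ler_sum_nat => n /andP [_ ltnb].
rewrite annulus1E; apply: le_trans (shell_sum_bounds (ltn0Sn n)).2 _.
by rewrite ler_wpM2l // ge0_ler_powR // ?nnegrE // ler_nat.
Qed.

Lemma ball_sum_ge k L : (k <= L)%N ->
  c2 * k%:R `^ s *+ (L - k) <= \sum_(x \in ball_len ell L) f x.
Proof.
move=> lekL; apply: le_trans (annulus_sum_ge lekL) _.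
apply: ler_fsum_subset => [|x /andP [_ lexL] //|x _]; [exact: finite_ball | exact: f_ge0].
Qed.

End Annuli.

Lemma weight_ratio_lt (R : realType) (c1 c2 s eps : R) (M k n m : nat) :
  0 <= c1 -> 0 < c2 -> 0 <= s -> 0 < eps -> (0 < k)%N -> (n <= 4 * k)%N ->
  2 * M%:R * c1 * 4 `^ s / (eps * c2) < m%:R ->
  c1 * n%:R `^ s *+ (2 * M) < eps * (c2 * k%:R `^ s *+ m).
Proof.
move=> c1_ge0 c2_gt0 s_ge0 eps_gt0 k_gt0 len4k; rewrite ltr_pdivrMr ?mulr_gt0 // => ltm.
have ks_gt0 : 0 < k%:R `^ s by rewrite powR_gt0 // ltr0n.
have ns_le : n%:R `^ s <= 4 `^ s * k%:R `^ s.
  by rewrite -powRM // ge0_ler_powR // ?nnegrE ?mulr_ge0 // -natrM ler_nat.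
rewrite -[_ *+ (2 * M)]mulr_natr -[_ *+ m]mulr_natr natrM.
set X := k%:R `^ s; set F := 4 `^ s.
apply: (@le_lt_trans _ _ (c1 * (F * X) * (2%:R * M%:R))).
  by rewrite ler_wpM2r ?mulr_ge0 ?ler_wpM2l.
have -> : c1 * (F * X) * (2%:R * M%:R) = X * (2 * M%:R * c1 * F) by ring.
have -> : eps * (c2 * X * m%:R) = X * (m%:R * (eps * c2)) by ring.
by rewrite ltr_pM2l.
Qed.

Theorem proposition3p5 (I : choiceType) (e : I) (conj : I -> I)
    (N : I -> I -> I -> nat) (d : I -> nat)
    (HG : cmqg_fusion e conj N d)
    (R : realType) (ell : I -> R)
    (Hell : length_function e conj N ell)
    (Hgrowth : strong_poly_growth d ell) :
  forall (S : {fset I}), S != fset0 ->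
  forall eps : R, 0 < eps ->
  exists L0 : nat, forall L : nat, (L0 <= L)%N ->
    \sum_(x \in boundary N [set` S] (ball_len ell L)) ((d x)%:R : R) ^+ 2
      < eps * \sum_(x \in ball_len ell L) ((d x)%:R : R) ^+ 2.
Proof.
move=> S _ eps eps_gt0.
have [_ _ _ [_ [frob _]] _] := HG.
have ell_ge0 : forall x, 0 <= ell x by case: Hell.
have [finite_shell [c1 [c2 [s [c1_gt0 c2_gt0 s_gt0 shell_sum]]]]] := Hgrowth.
have [M ellS] := fset_nat_ub S ell.
have [[c1_ge0 c2_ge0] s_ge0] := (ltW c1_gt0, ltW c2_gt0, ltW s_gt0).
pose T := 2 * M%:R * c1 * 4 `^ s / (eps * c2).
have T_ge0 : 0 <= T by rewrite /T divr_ge0 ?mulr_ge0 ?powR_ge0 ?(ltW eps_gt0).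
exists (2 * Num.bound T + 2 * M + 4)%N => L leL.
pose f x := ((d x)%:R : R) ^+ 2.
have f_ge0 x : 0 <= f x by exact: sqr_ge0.
have boundary_le : \sum_(x \in boundary N [set` S] (ball_len ell L)) f x
    <= c1 * (L + M)%:R `^ s *+ (2 * M).
  have -> : (2 * M = L + M - (L - M))%N by lia.
  apply: le_trans _ (annulus_sum_le finite_shell c1_ge0 s_ge0 shell_sum _); last by lia.
  apply: ler_fsum_subset; first exact: finite_annulus.
  - by apply: boundary_ball_sub_annulus Hell (fun a b g => (frob a b g).1) _ _ _ ellS _; lia.
  - by move=> x _; exact: f_ge0.
have ball_ge := ball_sum_ge finite_shell ell_ge0 f_ge0 c2_ge0 s_ge0 shell_sum (leq_div L 2).
apply: le_lt_trans boundary_le (lt_le_trans _ (ler_wpM2l (ltW eps_gt0) ball_ge)).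
apply: weight_ratio_lt => //; [lia | lia |].
by apply: lt_le_trans (archi_boundP T_ge0) _; rewrite ler_nat; lia.
Qed.
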